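(* Let $\Theta$ be a compact subset of $(0,1/2)\times(\mathbb{R}^2\setminus\Delta)$, $\Delta=\{(x,x):x\in\mathbb{R}\}$, and let $P<1/2$ be such that $p\le P$ for all $(p,\alpha,\beta)\in\Theta$. Let $X_1,\dots,X_n$ be real numbers. For $\theta=(p,\alpha,\beta)\in\Theta$, $u\in\mathbb{R}$, let $M(\theta,u)=pe^{iu\alpha}+(1-p)e^{iu\beta}$ and $$Z_k(\theta,u)=\frac{e^{iuX_k}}{M(\theta,u)}-\frac{e^{-iuX_k}}{M(\theta,-u)},$$ with $\dot Z_k$ and $\ddot Z_k$ its gradient and Hessian with respect to $\theta$. Then there is an absolute constant $C>0$ such that for all $u\in\mathbb{R}$, all $\theta,\theta'\in\Theta$ and all $k\in\{1,\dots,n\}$: 1. $\|\dot Z_k(\theta,u)-\dot Z_k(\theta',u)\|\le\|\theta-\theta'\|\cdot\frac{C(1+|u|+u^2)}{(1-2P)^3}$; 2. $\|\ddot Z_k(\theta,u)-\ddot Z_k(\theta',u)\|_2\le\|\theta-\theta'\|\cdot\frac{C(1+|u|+u^2+|u|^3)}{(1-2P)^4}$.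
   Context: $\|v\|$ is the Euclidean (Hermitian) norm of a vector and $\|A\|_2^2=\mathrm{tr}(A^\top A)$ for a matrix $A$. *)

From mathcomp Require Import all_boot all_order all_algebra.
From mathcomp Require Import all_classical all_reals all_analysis.
From mathcomp Require Import complex.
Import Order.TTheory GRing.Theory Num.Theory.
Import numFieldNormedType.Exports.
Local Open Scope ring_scope.
Local Open Scope complex_scope.

Definition ip {R : realType} (th : 'rV[R]_3) : R := th 0 0.
Definition ialpha {R : realType} (th : 'rV[R]_3) : R := th 0 1.
Definition ibeta {R : realType} (th : 'rV[R]_3) : R := th 0 2.

Definition expi {R : realType} (t : R) : R[i] := cos t +i* sin t.

Definition RtoC {R : realType} (x : R) : R[i] := x +i* 0.

Definition Mth {R : realType} (th : 'rV[R]_3) (u : R) : R[i] :=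
  RtoC (ip th) * expi (u * ialpha th) + RtoC (1 - ip th) * expi (u * ibeta th).

Definition Zfun {R : realType} (x : R) (th : 'rV[R]_3) (u : R) : R[i] :=
  expi (u * x) / Mth th u - expi (- u * x) / Mth th (- u).

Definition pderiv {R : realType} (i : 'I_3) (f : 'rV[R]_3 -> R[i]) (th : 'rV[R]_3) : R[i] :=
  ('D_('e_i) (fun t => complex.Re (f t)) th) +i* ('D_('e_i) (fun t => complex.Im (f t)) th).

Definition grad {R : realType} (f : 'rV[R]_3 -> R[i]) (th : 'rV[R]_3) : 'rV[R[i]]_3 :=
  \row_j pderiv j f th.
Definition hess {R : realType} (f : 'rV[R]_3 -> R[i]) (th : 'rV[R]_3) : 'M[R[i]]_3 :=
  \matrix_(j, l) pderiv l (pderiv j f) th.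

Definition cmod2 {R : realType} (z : R[i]) : R := complex.Re z ^+ 2 + complex.Im z ^+ 2.

Definition enorm {R : realType} (v : 'rV[R]_3) : R := Num.sqrt (\sum_j v 0 j ^+ 2).
Definition hnorm {R : realType} (v : 'rV[R[i]]_3) : R := Num.sqrt (\sum_j cmod2 (v 0 j)).
Definition fnorm {R : realType} (A : 'M[R[i]]_3) : R :=
  Num.sqrt (\sum_j \sum_l cmod2 (A j l)).

(* The derivatives of Z in theta are computed in closed form: along any direction they are
   polynomials in p, e^{iu alpha}, e^{iu beta}, u and 1/M.  Every factor is bounded and
   Lipschitz on {0 <= p <= P}: the exponentials have modulus 1 and are |u|-Lipschitz in
   (alpha, beta), and |M| >= (1 - p) - p >= 1 - 2P, so 1/M is bounded by 1/(1 - 2P) and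
   1/M - 1/M' = (M' - M)/(M M').  Bounds and Lipschitz constants propagate through sums and
   products, each factor of 1/M costing a power of 1/(1 - 2P) and each derivative of an
   exponential a power of |u|. *)

From mathcomp Require Import all_boot all_order all_algebra.
From mathcomp Require Import all_classical all_reals all_analysis.
From mathcomp Require Import complex ring lra.
Import Order.TTheory GRing.Theory Num.Theory.
Import numFieldNormedType.Exports.
Import Normc.
Local Open Scope ring_scope.
Local Open Scope complex_scope.

Set Implicit Arguments.
Unset Strict Implicit.
Unset Printing Implicit Defensive.

Section ComplexDerivative.
Variable R : realType.
Local Notation V := 'rV[R]_3.
Local Notation Re := complex.Re.
Local Notation Im := complex.Im.
Implicit Types (x v : V) (F G : V -> R[i]).

Lemma Re_add (a b : R[i]) : Re (a + b) = Re a + Re b. Proof. by case: a; case: b. Qed.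
Lemma Im_add (a b : R[i]) : Im (a + b) = Im a + Im b. Proof. by case: a; case: b. Qed.
Lemma Re_opp (a : R[i]) : Re (- a) = - Re a. Proof. by case: a. Qed.
Lemma Im_opp (a : R[i]) : Im (- a) = - Im a. Proof. by case: a. Qed.
Lemma Re_mul (a b : R[i]) : Re (a * b) = Re a * Re b - Im a * Im b.
Proof. by case: a; case: b. Qed.
Lemma Im_mul (a b : R[i]) : Im (a * b) = Re a * Im b + Im a * Re b.
Proof. by case: a => ? ?; case: b. Qed.
Lemma Re_inv (a : R[i]) : Re a^-1 = Re a / (Re a ^+ 2 + Im a ^+ 2). Proof. by case: a. Qed.
Lemma Im_inv (a : R[i]) : Im a^-1 = - (Im a / (Re a ^+ 2 + Im a ^+ 2)). Proof. by case: a. Qed.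

Lemma is_derive_inv (f : V -> R) x v df : f x != 0 -> is_derive x v f df ->
  is_derive x v (fun t => (f t)^-1) (- df / f x ^+ 2).
Proof.
move=> fx0 [fdf <-]; apply: DeriveDef; first exact: derivableV.
by rewrite deriveV // /GRing.scale /= mulrC mulrN mulNr.
Qed.

Definition is_cderive x v F (d : R[i]) :=
  is_derive x v (fun t => Re (F t)) (Re d) /\ is_derive x v (fun t => Im (F t)) (Im d).

Lemma is_cderive_eq x v F d d' : is_cderive x v F d -> d = d' -> is_cderive x v F d'.
Proof. by move=> ? <-. Qed.

Lemma is_cderive_cst x v (c : R[i]) : is_cderive x v (fun _ => c) 0.
Proof. by split; exact: is_derive_cst. Qed.

Lemma is_cderiveD x v F G dF dG : is_cderive x v F dF -> is_cderive x v G dG ->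
  is_cderive x v (fun t => F t + G t) (dF + dG).
Proof.
move=> [F1 F2] [G1 G2]; split.
  under eq_fun do rewrite Re_add.
  by rewrite Re_add; exact: is_deriveD.
under eq_fun do rewrite Im_add.
by rewrite Im_add; exact: is_deriveD.
Qed.

Lemma is_cderiveN x v F dF : is_cderive x v F dF -> is_cderive x v (fun t => - F t) (- dF).
Proof.
move=> [F1 F2]; split.
  under eq_fun do rewrite Re_opp.
  by rewrite Re_opp; exact: is_deriveN.
under eq_fun do rewrite Im_opp.
by rewrite Im_opp; exact: is_deriveN.
Qed.

Lemma is_cderiveB x v F G dF dG : is_cderive x v F dF -> is_cderive x v G dG ->
  is_cderive x v (fun t => F t - G t) (dF - dG).
Proof. by move=> HF HG; apply: is_cderiveD => //; exact: is_cderiveN. Qed.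

Lemma is_cderiveM x v F G dF dG : is_cderive x v F dF -> is_cderive x v G dG ->
  is_cderive x v (fun t => F t * G t) (dF * G x + F x * dG).
Proof.
move=> [F1 F2] [G1 G2]; split.
  under eq_fun do rewrite Re_mul.
  apply: is_derive_eq (is_deriveB (is_deriveM F1 G1) (is_deriveM F2 G2)) _.
  by rewrite Re_add !Re_mul /GRing.scale /=; ring.
under eq_fun do rewrite Im_mul.
apply: is_derive_eq (is_deriveD (is_deriveM F1 G2) (is_deriveM F2 G1)) _.
by rewrite Im_add !Im_mul /GRing.scale /=; ring.
Qed.

Lemma is_cderiveV x v F dF : F x != 0 -> is_cderive x v F dF ->
  is_cderive x v (fun t => (F t)^-1) (- dF / F x ^+ 2).
Proof.
move=> Fx0 [F1 F2].
have N0 : Re (F x) ^+ 2 + Im (F x) ^+ 2 != 0.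
  move: Fx0; apply: contra; case: (F x) => a b /= /eqP ab0.
  have a0 : a = 0 by apply/eqP; rewrite -sqrf_eq0; apply/eqP; nra.
  have b0 : b = 0 by apply/eqP; rewrite -sqrf_eq0; apply/eqP; nra.
  by rewrite a0 b0.
have N1 : is_derive x v (fun t => Re (F t) ^+ 2 + Im (F t) ^+ 2)
    (2 * (Re (F x) * Re dF + Im (F x) * Im dF)).
  apply: is_derive_eq (is_deriveD (is_deriveM F1 F1) (is_deriveM F2 F2)) _.
  by rewrite /GRing.scale /=; ring.
have N2 := is_derive_inv N0 N1.
have sq : forall a b : R, (a * a - b * b) ^+ 2 + (a * b + b * a) ^+ 2 = (a ^+ 2 + b ^+ 2) ^+ 2.
  by move=> a b; ring.
split.
  under eq_fun do rewrite Re_inv.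
  apply: is_derive_eq (is_deriveM F1 N2) _.
  rewrite /GRing.scale /= expr2 !(Re_mul, Im_mul, Re_inv, Im_inv, Re_opp, Im_opp) sq.
  by field.
under eq_fun do rewrite Im_inv.
apply: is_derive_eq (is_deriveN (is_deriveM F2 N2)) _.
rewrite /GRing.scale /= expr2 !(Re_mul, Im_mul, Re_inv, Im_inv, Re_opp, Im_opp) sq.
by field.
Qed.

Lemma is_derive_along (f : V -> R) x v d :
  is_derive x v f d <-> is_derive (0 : R) 1 (fun s => f (s *: v + x)) d.
Proof.
have E : (fun h : R => h^-1 *: ((f \o shift x) (h *: v) - f x)) =
    (fun h : R => h^-1 *: (((fun s => f (s *: v + x)) \o shift 0) (h *: 1) - f (0 *: v + x))).
  by apply: funext => h /=; rewrite addr0 scale0r add0r [h%:A]mulr1.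
by split=> -[D1 D2]; apply: DeriveDef; move: D1 D2; rewrite /derivable /derive E.
Qed.

Lemma is_derive_coord x v j : is_derive x v (fun t : V => t 0 j) (v 0 j).
Proof.
apply/is_derive_along.
have -> : (fun s : R => (s *: v + x) 0 j) = (@id R) * cst (v 0 j) + cst (x 0 j).
  by apply: funext => s; rewrite !mxE.
apply: is_derive_eq.
by rewrite /GRing.scale /=; ring.
Qed.

Lemma is_derive_cos_comp (g : V -> R) x v dg : is_derive x v g dg ->
  is_derive x v (fun t => cos (g t)) (- sin (g x) * dg).
Proof.
move=> /is_derive_along D; apply/is_derive_along.
by have := is_derive1_comp (is_derive_cos _) D; rewrite /= scale0r add0r.
Qed.

Lemma is_derive_sin_comp (g : V -> R) x v dg : is_derive x v g dg ->
  is_derive x v (fun t => sin (g t)) (cos (g x) * dg).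
Proof.
move=> /is_derive_along D; apply/is_derive_along.
by have := is_derive1_comp (is_derive_sin _) D; rewrite /= scale0r add0r.
Qed.

Lemma is_cderive_RtoC x v (g : V -> R) dg : is_derive x v g dg ->
  is_cderive x v (fun t => RtoC (g t)) (RtoC dg).
Proof. by move=> D; split => //=; exact: is_derive_cst. Qed.

Lemma is_cderive_expi x v (g : V -> R) dg : is_derive x v g dg ->
  is_cderive x v (fun t => expi (g t)) ('i * expi (g x) * RtoC dg).
Proof.
move=> D; split.
  by apply: is_derive_eq (is_derive_cos_comp D) _; rewrite /=; ring.
by apply: is_derive_eq (is_derive_sin_comp D) _; rewrite /=; ring.
Qed.

Lemma is_cderive_pderiv (i : 'I_3) F x d : is_cderive x 'e_i F d -> pderiv i F x = d.
Proof. by rewrite /pderiv => -[[_ ->] [_ ->]]; case: d. Qed.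

Lemma pderiv_near (i : 'I_3) F G x :
  (\forall t \near x, F t = G t) -> pderiv i F x = pderiv i G x.
Proof.
move=> FG; rewrite /pderiv; congr (_ +i* _); apply: near_eq_derive;
  by apply: filterS FG => t /= ->.
Qed.
End ComplexDerivative.

Section ComplexModulus.
Variable R : realType.

Lemma normc_ge0 (z : R[i]) : 0 <= normc z.
Proof. by case: z => a b; exact: sqrtr_ge0. Qed.

Lemma normc_RtoC (y : R) : normc (RtoC y) = `|y|.
Proof. by rewrite /= expr0n /= addr0 sqrtr_sqr. Qed.

Lemma normc_expi (y : R) : normc (expi y) = 1.
Proof. by rewrite /= cos2Dsin2 sqrtr1. Qed.

Lemma RtoCB (a b : R) : RtoC a - RtoC b = RtoC (a - b).
Proof. by rewrite /RtoC !complexr0 rmorphB. Qed.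

Lemma normc_le_ReIm (z : R[i]) : normc z <= `|complex.Re z| + `|complex.Im z|.
Proof.
case: z => a b /=; rewrite -[X in _ <= X]ger0_norm ?addr_ge0 // -sqrtr_sqr ler_sqrt ?sqr_ge0 //.
rewrite sqrrD !real_normK ?num_real //; have := mulr_ge0 (normr_ge0 a) (normr_ge0 b); lra.
Qed.

Lemma lipschitz1_of_is_derive (f df : R -> R) :
  (forall y : R, is_derive y 1 f (df y)) -> continuous f -> (forall y, `|df y| <= 1) ->
  forall a b : R, `|f a - f b| <= `|a - b|.
Proof.
move=> fD fC dfB a b; wlog ab : a b / a <= b.
  by move=> H; case/orP: (le_total a b) => [/H // | /H]; rewrite (distrC (f b)) (distrC b).
rewrite (distrC (f a)) (distrC a).
have [y _ ->] := MVT_segment ab (fun y _ => fD y) (continuous_subspaceT fC).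
by rewrite normrM; apply: ler_piMl.
Qed.

Lemma expi_dist_le (a b : R) : normc (expi a - expi b) <= 2 * `|a - b|.
Proof.
apply: le_trans (normc_le_ReIm _) _; rewrite /expi /= mulr2n mulrDl mul1r.
apply: lerD.
  apply: (lipschitz1_of_is_derive (@is_derive_cos R) (@continuous_cos R)).
  by move=> y; rewrite normrN; exact: sin_max.
exact: (lipschitz1_of_is_derive (@is_derive_sin R) (@continuous_sin R) (@cos_max R)).
Qed.

End ComplexModulus.

Section ClosedForms.
Variable R : realType.
Local Notation V := 'rV[R]_3.
Implicit Types (w x : R) (t v : V).

Definition phase w (j : 'I_3) t : R[i] := expi (w * t 0 j).
Definition dphase w (j : 'I_3) v : R[i] := 'i * RtoC (w * v 0 j).

Definition dM w t v : R[i] :=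
  RtoC (v 0 0) * phase w 1 t + RtoC (ip t) * (phase w 1 t * dphase w 1 v)
  + (RtoC (- v 0 0) * phase w 2 t + RtoC (1 - ip t) * (phase w 2 t * dphase w 2 v)).

Definition d2M w t v (v' : V) : R[i] :=
  RtoC (v 0 0) * (phase w 1 t * dphase w 1 v')
  + (RtoC (v' 0 0) * (phase w 1 t * dphase w 1 v)
     + RtoC (ip t) * (phase w 1 t * dphase w 1 v' * dphase w 1 v))
  + (RtoC (- v 0 0) * (phase w 2 t * dphase w 2 v')
     + (RtoC (- v' 0 0) * (phase w 2 t * dphase w 2 v)
        + RtoC (1 - ip t) * (phase w 2 t * dphase w 2 v' * dphase w 2 v))).

Definition Minv w t : R[i] := (Mth t w)^-1.
Definition dMinv w t v : R[i] := - dM w t v * (Minv w t * Minv w t).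
Definition d2Minv w t v (v' : V) : R[i] := - d2M w t v v' * (Minv w t * Minv w t)
  + 2 * dM w t v * dM w t v' * (Minv w t * Minv w t * Minv w t).

Definition dZ x w t v : R[i] := expi (w * x) * dMinv w t v - expi (- w * x) * dMinv (- w) t v.
Definition d2Z x w t v (v' : V) : R[i] :=
  expi (w * x) * d2Minv w t v v' - expi (- w * x) * d2Minv (- w) t v v'.

Lemma is_cderive_phase w j t v : is_cderive t v (phase w j) (phase w j t * dphase w j v).
Proof.
have Dlin : is_derive t v (fun s : V => w * s 0 j) (w * v 0 j).
  apply: is_derive_eq (is_deriveM (is_derive_cst w t v) (is_derive_coord t v j)) _.
  by rewrite /GRing.scale /=; ring.
by apply: is_cderive_eq (is_cderive_expi Dlin) _; rewrite /phase /dphase; ring.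
Qed.

Lemma is_cderive_ip t v : is_cderive t v (fun s => RtoC (ip s)) (RtoC (v 0 0)).
Proof. exact/is_cderive_RtoC/is_derive_coord. Qed.

Lemma is_cderive_1_ip t v : is_cderive t v (fun s => RtoC (1 - ip s)) (RtoC (- v 0 0)).
Proof.
have D := is_deriveB (is_derive_cst (1 : R) t v) (is_derive_coord t v 0).
rewrite sub0r in D.
exact: is_cderive_RtoC D.
Qed.

Lemma is_cderive_Mth w t v : is_cderive t v (Mth^~ w) (dM w t v).
Proof.
exact: is_cderiveD (is_cderiveM (is_cderive_ip t v) (is_cderive_phase w 1 t v))
                   (is_cderiveM (is_cderive_1_ip t v) (is_cderive_phase w 2 t v)).
Qed.

Lemma is_cderive_dM w t v (v' : V) : is_cderive t v' (dM w ^~ v) (d2M w t v v').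
Proof.
have Dp j := is_cderiveM (is_cderive_phase w j t v') (is_cderive_cst t v' (dphase w j v)).
apply: is_cderive_eq (is_cderiveD
  (is_cderiveD (is_cderiveM (is_cderive_cst t v' (RtoC (v 0 0))) (is_cderive_phase w 1 t v'))
               (is_cderiveM (is_cderive_ip t v') (Dp 1)))
  (is_cderiveD (is_cderiveM (is_cderive_cst t v' (RtoC (- v 0 0))) (is_cderive_phase w 2 t v'))
               (is_cderiveM (is_cderive_1_ip t v') (Dp 2)))) _.
by rewrite /d2M; ring.
Qed.

Lemma normc_dphase w j v : normc (dphase w j v) = `|w * v 0 j|.
Proof. by rewrite normcM normc_RtoC /= expr0n expr1n add0r sqrtr1 mul1r. Qed.

Lemma normc_Mth_ge w t : `|1 - ip t| - `|ip t| <= normc (Mth t w).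
Proof.
have := le_normcD (Mth t w) (- (RtoC (ip t) * phase w 1 t)).
rewrite /Mth addrAC subrr add0r normcN !normcM !normc_RtoC !normc_expi !mulr1.
by rewrite lerBlDr.
Qed.

Lemma Mth_neq0 w t : ip t < 1 / 2 -> Mth t w != 0.
Proof.
move=> p_lt; apply: contraTneq (normc_Mth_ge w t) => ->; rewrite normc0 -ltNge subr_gt0.
have q0 : 0 <= 1 - ip t by lra.
by case: (lerP 0 (ip t)) => p0; rewrite (ger0_norm q0) ?(ger0_norm p0) ?(ltr0_norm p0); lra.
Qed.

Lemma is_cderive_Minv w t v : ip t < 1 / 2 -> is_cderive t v (Minv w) (dMinv w t v).
Proof.
move=> p_lt; apply: is_cderive_eq (is_cderiveV (Mth_neq0 w p_lt) (is_cderive_Mth w t v)) _.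
by rewrite /dMinv /Minv -invfM expr2.
Qed.

Lemma is_cderive_dMinv w t v (v' : V) : ip t < 1 / 2 ->
  is_cderive t v' (dMinv w ^~ v) (d2Minv w t v v').
Proof.
move=> p_lt; have D := is_cderive_Minv w v' p_lt.
apply: is_cderive_eq (is_cderiveM (is_cderiveN (is_cderive_dM w t v v')) (is_cderiveM D D)) _.
by rewrite /d2Minv /dMinv; ring.
Qed.

Lemma is_cderive_Zfun x w t v : ip t < 1 / 2 ->
  is_cderive t v (fun s => Zfun x s w) (dZ x w t v).
Proof.
move=> p_lt; apply: is_cderive_eq (is_cderiveB
  (is_cderiveM (is_cderive_cst t v (expi (w * x))) (is_cderive_Minv w v p_lt))
  (is_cderiveM (is_cderive_cst t v (expi (- w * x))) (is_cderive_Minv (- w) v p_lt))) _.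
by rewrite /dZ; ring.
Qed.

Lemma is_cderive_dZ x w t v (v' : V) : ip t < 1 / 2 ->
  is_cderive t v' (dZ x w ^~ v) (d2Z x w t v v').
Proof.
move=> p_lt; apply: is_cderive_eq (is_cderiveB
  (is_cderiveM (is_cderive_cst t v' (expi (w * x))) (is_cderive_dMinv w v v' p_lt))
  (is_cderiveM (is_cderive_cst t v' (expi (- w * x))) (is_cderive_dMinv (- w) v v' p_lt))) _.
by rewrite /d2Z; ring.
Qed.

Lemma pderiv_Zfun x w t (j : 'I_3) : ip t < 1 / 2 ->
  pderiv j (fun s => Zfun x s w) t = dZ x w t 'e_j.
Proof. by move=> p_lt; apply/is_cderive_pderiv/is_cderive_Zfun. Qed.

Lemma pderiv2_Zfun x w t (j l : 'I_3) : ip t < 1 / 2 ->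
  pderiv l (pderiv j (fun s => Zfun x s w)) t = d2Z x w t 'e_j 'e_l.
Proof.
move=> p_lt; rewrite (@pderiv_near _ _ _ (dZ x w ^~ 'e_j)).
  exact/is_cderive_pderiv/is_cderive_dZ.
have : \forall s \near t, ip s < 1 / 2.
  have p_near : nbhs (ip t) (fun z : R => z < 1 / 2).
    by apply: open_nbhs_nbhs; split; [exact: open_lt | exact: p_lt].
  exact: (@coord_continuous _ _ _ 0 0 t _ p_near).
by apply: filterS => s; exact: pderiv_Zfun.
Qed.
End ClosedForms.

Local Close Scope complex_scope.

Section WeightedEstimates.
Variables (R : realType) (P u : R).
Hypotheses (P_ge0 : 0 <= P) (P_lt : P < 1 / 2).
Local Notation V := 'rV[R]_3.

Definition weight (a b : nat) : R := (1 + `|u|) ^+ a * (1 - 2 * P)^-1 ^+ b.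

Definition admissible (t : V) := 0 <= ip t <= P.

Definition bounded_lipschitz (f : V -> R[i]) (k a b l c e : nat) :=
  (forall t, admissible t -> normc (f t) <= k%:R * weight a b) /\
  (forall t t', admissible t -> admissible t' ->
     normc (f t - f t') <= l%:R * weight c e * enorm (t - t')).

Lemma gap_gt0 : 0 < 1 - 2 * P. Proof. by have := P_lt; lra. Qed.

Let base_ge1 : 1 <= 1 + `|u|. Proof. by rewrite lerDl. Qed.
Let inv_gap_ge1 : 1 <= (1 - 2 * P)^-1.
Proof. by rewrite invf_ge1 ?gap_gt0 //; have := P_ge0; lra. Qed.

Lemma weight_le a b a' b' : (a <= a')%N -> (b <= b')%N -> weight a b <= weight a' b'.
Proof.
move=> aa' bb'; apply: ler_pM.
- exact: exprn_ge0 (le_trans ler01 base_ge1).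
- exact: exprn_ge0 (le_trans ler01 inv_gap_ge1).
- exact: ler_weXn2l base_ge1 _ _ aa'.
- exact: ler_weXn2l inv_gap_ge1 _ _ bb'.
Qed.

Lemma weightD a b a' b' : weight a b * weight a' b' = weight (a + a') (b + b').
Proof. by rewrite /weight !exprD; ring. Qed.

Lemma enorm_ge0 (t : V) : 0 <= enorm t. Proof. exact: sqrtr_ge0. Qed.

Lemma bounded_lipschitz_cst (z : R[i]) k a b : normc z <= k%:R * weight a b ->
  bounded_lipschitz (fun _ => z) k a b 0 0 0.
Proof. by move=> zB; split=> // t t' _ _; rewrite subrr normc0 !mul0r. Qed.

Lemma bounded_lipschitzD f g k1 a1 b1 l1 c1 e1 k2 a2 b2 l2 c2 e2 :
  bounded_lipschitz f k1 a1 b1 l1 c1 e1 -> bounded_lipschitz g k2 a2 b2 l2 c2 e2 ->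
  bounded_lipschitz (fun t => f t + g t) (k1 + k2) (maxn a1 a2) (maxn b1 b2)
    (l1 + l2) (maxn c1 c2) (maxn e1 e2).
Proof.
move=> [fB fL] [gB gL]; split=> [t At | t t' At At'].
  apply: le_trans (le_normcD _ _) _; rewrite natrD mulrDl.
  apply: lerD; (apply: le_trans; first by [apply: fB | apply: gB]);
    by apply: ler_wpM2l => //; apply: weight_le; rewrite ?leq_maxl ?leq_maxr.
have -> : f t + g t - (f t' + g t') = (f t - f t') + (g t - g t') by ring.
apply: le_trans (le_normcD _ _) _; rewrite natrD !mulrDl.
apply: lerD; (apply: le_trans; first by [apply: fL | apply: gL]);
  apply: ler_wpM2r; rewrite ?enorm_ge0 //; apply: ler_wpM2l => //;
  by apply: weight_le; rewrite ?leq_maxl ?leq_maxr.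
Qed.

Lemma bounded_lipschitzN f k a b l c e :
  bounded_lipschitz f k a b l c e -> bounded_lipschitz (fun t => - f t) k a b l c e.
Proof.
move=> [fB fL]; split=> [t At | t t' At At']; first by rewrite normcN; exact: fB.
by rewrite -opprD normcN; exact: fL.
Qed.

Lemma weighted_mul_le (m n : R) a b a' b' c e : 0 <= m -> 0 <= n ->
  (a + a' <= c)%N -> (b + b' <= e)%N ->
  m * weight a b * (n * weight a' b') <= m * n * weight c e.
Proof.
move=> m0 n0 ac be; rewrite mulrACA weightD.
by apply: ler_wpM2l; [exact: mulr_ge0 | exact: weight_le].
Qed.

Lemma bounded_lipschitzM f g k1 a1 b1 l1 c1 e1 k2 a2 b2 l2 c2 e2 :
  bounded_lipschitz f k1 a1 b1 l1 c1 e1 -> bounded_lipschitz g k2 a2 b2 l2 c2 e2 ->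
  bounded_lipschitz (fun t => f t * g t) (k1 * k2) (a1 + a2) (b1 + b2)
    (l1 * k2 + k1 * l2) (maxn (c1 + a2) (a1 + c2)) (maxn (e1 + b2) (b1 + e2)).
Proof.
move=> [fB fL] [gB gL]; split=> [t At | t t' At At'].
  rewrite normcM natrM -weightD mulrACA.
  by apply: ler_pM; rewrite ?fB ?gB ?normc_ge0.
have -> : f t * g t - f t' * g t' = (f t - f t') * g t + f t' * (g t - g t') by ring.
apply: le_trans (le_normcD _ _) _; rewrite !normcM natrD !natrM !mulrDl.
have d0 := enorm_ge0 (t - t').
apply: lerD.
  apply: le_trans (ler_pM (normc_ge0 _) (normc_ge0 _) (fL t t' At At') (gB t At)) _.
  rewrite mulrAC; apply: ler_wpM2r => //.
  by apply: weighted_mul_le; rewrite ?leq_maxl.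
apply: le_trans (ler_pM (normc_ge0 _) (normc_ge0 _) (fB t' At') (gL t t' At At')) _.
rewrite mulrA; apply: ler_wpM2r => //.
by apply: weighted_mul_le; rewrite ?leq_maxr.
Qed.

Lemma coord_dist_le (t t' : V) j : `|t 0 j - t' 0 j| <= enorm (t - t').
Proof.
rewrite /enorm -sqrtr_sqr ler_sqrt ?sumr_ge0 // => [|i _]; last exact: sqr_ge0.
rewrite (bigD1 j) //= !mxE lerDl sumr_ge0 // => i _; exact: sqr_ge0.
Qed.

Lemma bounded_lipschitz_ip : bounded_lipschitz (fun t => RtoC (ip t)) 1 0 0 1 0 0.
Proof.
split=> [t /andP[p0 pP] | t t' _ _]; rewrite /weight !expr0 !mulr1 ?mul1r.
  by rewrite normc_RtoC ger0_norm //; have := P_lt; lra.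
by rewrite RtoCB normc_RtoC coord_dist_le.
Qed.

Lemma bounded_lipschitz_1_ip : bounded_lipschitz (fun t => RtoC (1 - ip t)) 1 0 0 1 0 0.
Proof.
split=> [t /andP[p0 pP] | t t' _ _]; rewrite /weight !expr0 !mulr1 ?mul1r.
  by rewrite normc_RtoC ger0_norm; have := P_lt; lra.
rewrite RtoCB (_ : 1 - ip t - (1 - ip t') = ip t' - ip t); last by ring.
by rewrite normc_RtoC distrC coord_dist_le.
Qed.

Lemma bounded_lipschitz_phase w j : `|w| <= `|u| ->
  bounded_lipschitz (phase w j) 1 0 0 2 1 0.
Proof.
move=> wu; split=> [t _ | t t' _ _]; rewrite /weight !expr0 !mulr1 ?expr1.
  by rewrite /phase normc_expi.
apply: le_trans (expi_dist_le _ _) _; rewrite -mulrBr normrM -mulrA ler_wpM2l //.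
apply: ler_pM; rewrite ?normr_ge0 ?coord_dist_le //.
by apply: le_trans wu _; rewrite lerDr.
Qed.

Lemma normc_Mth_admissible w t : admissible t -> 1 - 2 * P <= normc (Mth t w).
Proof.
move=> /andP[p0 pP]; apply: le_trans (normc_Mth_ge w t).
have q0 : 0 <= 1 - ip t by have := P_lt; lra.
by rewrite (ger0_norm p0) (ger0_norm q0); lra.
Qed.

Lemma bounded_lipschitz_Minv w k a b l c e : bounded_lipschitz (Mth^~ w) k a b l c e ->
  bounded_lipschitz (Minv w) 1 0 1 l c e.+2.
Proof.
move=> [_ ML]; have gap := gap_gt0.
have MinvB t : admissible t -> normc (Minv w t) <= 1%:R * weight 0 1.
  move=> At; rewrite /weight expr0 expr1 !mul1r /Minv normcV lef_pV2 ?posrE //.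
    exact: normc_Mth_admissible.
  exact: lt_le_trans gap (normc_Mth_admissible w At).
split=> // t t' At At'.
have M0 s : admissible s -> Mth s w != 0.
  by move=> As; apply: contraTneq (normc_Mth_admissible w As) => ->; rewrite normc0 -ltNge.
have -> : Minv w t - Minv w t' = - (Mth t w - Mth t' w) * (Minv w t * Minv w t').
  by rewrite /Minv; field; rewrite !M0.
rewrite !normcM normcN.
apply: le_trans (ler_pM (normc_ge0 _) (mulr_ge0 (normc_ge0 _) (normc_ge0 _))
  (ML t t' At At') (ler_pM (normc_ge0 _) (normc_ge0 _) (MinvB t At) (MinvB t' At'))) _.
have -> : weight c e.+2 = weight c e * (weight 0 1 * weight 0 1).
  by rewrite !weightD !addn0 add1n addn2.
by rewrite !mul1r le_eqVlt; apply/orP; left; apply/eqP; ring.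
Qed.

Lemma bounded_lipschitz_RtoC (y : R) : `|y| <= 1 ->
  bounded_lipschitz (fun _ => RtoC y) 1 0 0 0 0 0.
Proof. by move=> y1; apply: bounded_lipschitz_cst; rewrite normc_RtoC /weight !expr0 !mulr1. Qed.

Lemma bounded_lipschitz_expi (y : R) : bounded_lipschitz (fun _ => expi y) 1 0 0 0 0 0.
Proof. by apply: bounded_lipschitz_cst; rewrite normc_expi /weight !expr0 !mulr1. Qed.

Section Composite.
Variable w : R.
Hypothesis wu : `|w| <= `|u|.

Lemma bounded_lipschitz_dphase (s : V) j : `|s 0 j| <= 1 ->
  bounded_lipschitz (fun _ => dphase w j s) 1 1 0 0 0 0.
Proof.
move=> s1; apply: bounded_lipschitz_cst.
rewrite normc_dphase normrM /weight expr0 expr1 !mulr1 mul1r.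
by rewrite -[X in _ <= X]mulr1 ler_pM ?normr_ge0 // (le_trans wu) // lerDr.
Qed.

Let BLD := bounded_lipschitzD.
Let BLM := bounded_lipschitzM.

Lemma bounded_lipschitz_Mth : bounded_lipschitz (Mth^~ w) 2 0 0 6 1 0.
Proof.
exact: BLD (BLM bounded_lipschitz_ip (bounded_lipschitz_phase 1 wu))
           (BLM bounded_lipschitz_1_ip (bounded_lipschitz_phase 2 wu)).
Qed.

Lemma bounded_lipschitz_dM (v : V) : (forall k, `|v 0 k| <= 1) ->
  bounded_lipschitz (dM w ^~ v) 4 1 0 10 2 0.
Proof.
move=> v1; have D j := BLM (bounded_lipschitz_phase j wu) (bounded_lipschitz_dphase (v1 j)).
have [v0 Nv0] : `|v 0 0| <= 1 /\ `|- v 0 0| <= 1 by rewrite normrN v1.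
exact: BLD (BLD (BLM (bounded_lipschitz_RtoC v0) (bounded_lipschitz_phase 1 wu))
                (BLM bounded_lipschitz_ip (D 1)))
           (BLD (BLM (bounded_lipschitz_RtoC Nv0) (bounded_lipschitz_phase 2 wu))
                (BLM bounded_lipschitz_1_ip (D 2))).
Qed.

Lemma bounded_lipschitz_d2M (v v' : V) :
  (forall k, `|v 0 k| <= 1) -> (forall k, `|v' 0 k| <= 1) ->
  bounded_lipschitz (fun t => d2M w t v v') 6 2 0 14 3 0.
Proof.
move=> v1 v'1.
have D j (s : V) : `|s 0 j| <= 1 ->
    bounded_lipschitz (fun t => phase w j t * dphase w j s) 1 1 0 2 2 0.
  by move=> s1; exact: BLM (bounded_lipschitz_phase j wu) (bounded_lipschitz_dphase s1).
have DD j : bounded_lipschitz (fun t => phase w j t * dphase w j v' * dphase w j v) 1 2 0 2 3 0.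
  exact: BLM (D j v' (v'1 j)) (bounded_lipschitz_dphase (v1 j)).
have [v0 Nv0] : `|v 0 0| <= 1 /\ `|- v 0 0| <= 1 by rewrite normrN v1.
have [v'0 Nv'0] : `|v' 0 0| <= 1 /\ `|- v' 0 0| <= 1 by rewrite normrN v'1.
have C y := @bounded_lipschitz_RtoC y.
exact: BLD (BLD (BLM (C _ v0) (D 1 v' (v'1 1)))
                (BLD (BLM (C _ v'0) (D 1 v (v1 1))) (BLM bounded_lipschitz_ip (DD 1))))
           (BLD (BLM (C _ Nv0) (D 2 v' (v'1 2)))
                (BLD (BLM (C _ Nv'0) (D 2 v (v1 2))) (BLM bounded_lipschitz_1_ip (DD 2)))).
Qed.

Lemma bounded_lipschitz_Minv_sq :
  bounded_lipschitz (fun t => Minv w t * Minv w t) 1 0 2 12 1 3.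
Proof. by have MB := bounded_lipschitz_Minv bounded_lipschitz_Mth; exact: (BLM MB MB). Qed.

Lemma bounded_lipschitz_dMinv (v : V) : (forall k, `|v 0 k| <= 1) ->
  bounded_lipschitz (dMinv w ^~ v) 4 1 2 58 2 3.
Proof.
move=> v1.
exact: BLM (bounded_lipschitzN (bounded_lipschitz_dM v1)) bounded_lipschitz_Minv_sq.
Qed.

Lemma bounded_lipschitz_d2Minv (v v' : V) :
  (forall k, `|v 0 k| <= 1) -> (forall k, `|v' 0 k| <= 1) ->
  bounded_lipschitz (fun t => d2Minv w t v v') 38 2 3 822 3 4.
Proof.
move=> v1 v'1; have MB := bounded_lipschitz_Minv bounded_lipschitz_Mth.
have two : bounded_lipschitz (fun _ => 2 : R[i]) 2 0 0 0 0 0.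
  apply: bounded_lipschitz_cst; rewrite /weight !expr0 !mulr1.
  by apply: le_trans (le_normcD 1 1) _; rewrite normc1.
exact: BLD (BLM (bounded_lipschitzN (bounded_lipschitz_d2M v1 v'1)) bounded_lipschitz_Minv_sq)
           (BLM (BLM (BLM two (bounded_lipschitz_dM v1)) (bounded_lipschitz_dM v'1))
                (BLM bounded_lipschitz_Minv_sq MB)).
Qed.
End Composite.

Lemma bounded_lipschitz_dZ x (v : V) : (forall k, `|v 0 k| <= 1) ->
  bounded_lipschitz (dZ x u ^~ v) 8 1 2 116 2 3.
Proof.
move=> v1; have E := bounded_lipschitz_expi.
have Nu : `|- u| <= `|u| by rewrite normrN.
exact: bounded_lipschitzD (bounded_lipschitzM (E _) (bounded_lipschitz_dMinv (lexx _) v1))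
  (bounded_lipschitzN (bounded_lipschitzM (E _) (bounded_lipschitz_dMinv Nu v1))).
Qed.

Lemma bounded_lipschitz_d2Z x (v v' : V) :
  (forall k, `|v 0 k| <= 1) -> (forall k, `|v' 0 k| <= 1) ->
  bounded_lipschitz (fun t => d2Z x u t v v') 76 2 3 1644 3 4.
Proof.
move=> v1 v'1; have E := bounded_lipschitz_expi.
have Nu : `|- u| <= `|u| by rewrite normrN.
exact: bounded_lipschitzD (bounded_lipschitzM (E _) (bounded_lipschitz_d2Minv (lexx _) v1 v'1))
  (bounded_lipschitzN (bounded_lipschitzM (E _) (bounded_lipschitz_d2Minv Nu v1 v'1))).
Qed.
End WeightedEstimates.

Section NormBounds.
Variable R : realType.

Lemma cmod2E (z : R[i]) : cmod2 z = normc z ^+ 2.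
Proof. by case: z => a b; rewrite /= sqr_sqrtr // addr_ge0 ?sqr_ge0. Qed.

Lemma sum_cmod2_le (I : finType) (z : I -> R[i]) L : (forall i, normc (z i) <= L) ->
  \sum_i cmod2 (z i) <= #|I|%:R * L ^+ 2.
Proof.
move=> zL; have zi i : cmod2 (z i) <= L ^+ 2.
  by rewrite cmod2E ler_sqr ?nnegrE ?normc_ge0 ?(le_trans (normc_ge0 (z i))).
by apply: le_trans (ler_sum _ (fun i _ => zi i)) _; rewrite sumr_const mulr_natl.
Qed.

Lemma hnorm_le (z : 'rV[R[i]]_3) L : (forall j, normc (z 0 j) <= L) -> hnorm z <= 2 * L.
Proof.
move=> zL; have L0 : 0 <= L := le_trans (normc_ge0 _) (zL 0).
rewrite /hnorm -(ger0_norm (mulr_ge0 _ L0)) // -sqrtr_sqr ler_sqrt ?sqr_ge0 //.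
apply: le_trans (sum_cmod2_le zL) _; rewrite card_ord exprMn ler_wpM2r ?sqr_ge0 //.
by rewrite -natrX ler_nat.
Qed.

Lemma fnorm_le (A : 'M[R[i]]_3) L : (forall j l, normc (A j l) <= L) -> fnorm A <= 3 * L.
Proof.
move=> AL; have L0 : 0 <= L := le_trans (normc_ge0 _) (AL 0 0).
rewrite /fnorm -(ger0_norm (mulr_ge0 _ L0)) // -sqrtr_sqr ler_sqrt ?sqr_ge0 //.
apply: le_trans (ler_sum _ (fun j _ => sum_cmod2_le (AL j))) _.
by rewrite sumr_const !card_ord le_eqVlt; apply/orP; left; apply/eqP; ring.
Qed.
End NormBounds.

Lemma e_coord_le1 {R : realType} (j k : 'I_3) : `|('e_j : 'rV[R]_3) 0 k| <= 1.
Proof. by rewrite mxE; case: (_ && _); rewrite ?normr1 ?normr0. Qed.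

Lemma scaled_weight_le (R : realType) (P u d q : R) a b (c k C : R) :
  P < 1 / 2 -> 0 <= d -> c * k * (1 + `|u|) ^+ a <= C * q ->
  c * (k * weight P u a b * d) <= d * (C * q / (1 - 2 * P) ^+ b).
Proof.
move=> P_lt d0 ckC.
have -> : c * (k * weight P u a b * d) = d * (c * k * (1 + `|u|) ^+ a / (1 - 2 * P) ^+ b).
  by rewrite /weight exprVn; ring.
by rewrite ler_wpM2l // ler_wpM2r // invr_ge0 exprn_ge0 //; lra.
Qed.

Theorem lemma2 (R : realType) :
  exists C : R, 0 < C /\
  forall (Theta : set 'rV[R]_3) (P : R) (n : nat) (X : 'I_n -> R),
    compact Theta ->
    (forall th, Theta th -> 0 < ip th < 1 / 2 /\ ialpha th != ibeta th) ->
    P < 1 / 2 ->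
    (forall th, Theta th -> ip th <= P) ->
    forall (u : R) (th th' : 'rV[R]_3) (k : 'I_n),
      Theta th -> Theta th' ->
      hnorm (grad (fun t => Zfun (X k) t u) th - grad (fun t => Zfun (X k) t u) th')
        <= enorm (th - th') * (C * (1 + `|u| + u ^+ 2) / (1 - 2 * P) ^+ 3)
      /\
      fnorm (hess (fun t => Zfun (X k) t u) th - hess (fun t => Zfun (X k) t u) th')
        <= enorm (th - th') * (C * (1 + `|u| + u ^+ 2 + `|u| ^+ 3) / (1 - 2 * P) ^+ 4).
Proof.
(* [3 * 1644 * 3] comes from [fnorm_le] and [(1 + t)^3 <= 3 (1 + t + t^2 + t^3)]; it also
   dominates the gradient constant [2 * 116 * 2]. *)
exists (9 * 1644); split; first lra.
move=> Theta P n X _ Theta_p P_lt p_le u th th' k Tth Tth'.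
have [/andP[p0 p_lt] _] := Theta_p th Tth; have [/andP[p0' p_lt'] _] := Theta_p th' Tth'.
have P0 : 0 <= P by have := p_le th Tth; lra.
have adm : admissible P th /\ admissible P th'.
  by rewrite /admissible !(ltW p0, ltW p0', p_le).
have d0 : 0 <= enorm (th - th') := sqrtr_ge0 _.
have u0 := normr_ge0 u; have u2 : u ^+ 2 = `|u| ^+ 2 by rewrite real_normK ?num_real.
have u20 : 0 <= `|u| ^+ 2 := exprn_ge0 2 u0; have u30 : 0 <= `|u| ^+ 3 := exprn_ge0 3 u0.
split.
  apply: le_trans (hnorm_le (L := 116%:R * weight P u 2 3 * enorm (th - th')) _) _.
    move=> j; rewrite !mxE !pderiv_Zfun //.
    by apply: (bounded_lipschitz_dZ u P0 P_lt _ (e_coord_le1 j)).2; case: adm.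
  apply: scaled_weight_le => //.
  rewrite u2 (_ : (1 + `|u|) ^+ 2 = 1 + 2 * `|u| + `|u| ^+ 2); last by ring.
  lra.
apply: le_trans (fnorm_le (L := 1644%:R * weight P u 3 4 * enorm (th - th')) _) _.
  move=> j l; rewrite !mxE !pderiv2_Zfun //.
  by apply: (bounded_lipschitz_d2Z u P0 P_lt _ (e_coord_le1 j) (e_coord_le1 l)).2; case: adm.
apply: scaled_weight_le => //.
rewrite u2 (_ : (1 + `|u|) ^+ 3 = 1 + 3 * `|u| + 3 * `|u| ^+ 2 + `|u| ^+ 3); last by ring.
lra.
Qed.
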